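(* Let $n\ge1$, let $\mathfrak{n}=\mathfrak{n}(n)$ be the Lie algebra defined in the context, and let $\operatorname{Der}(\mathfrak{n})_1$ be as in the context. Let $B=\{e'_1,\dots,e'_n\}$ be any basis of $E$ and let $\mathfrak{B}(B)$ be the associated ordered basis of $\mathfrak{n}$. If $D\in\operatorname{Der}(\mathfrak{n})_1$, then the matrix of $D$ in the ordered basis $\mathfrak{B}(B)$ is lower triangular, i.e. for every $w\in\mathfrak{B}(B)$, the coordinates of $D(w)$ with respect to $\mathfrak{B}(B)$ are zero on all basis vectors that precede $w$ in the order of $\mathfrak{B}(B)$.
   Context: Fix a field of characteristic zero and a positive integer $n$. The Lie algebra $\mathfrak{n}(n)$ has basis $e_1,\dots,e_n,a,b,x$; $u,y$; $e_i\wedge e_j$ ($1\le i<j\le n$); $c$; $x_1,\dots,x_n$; $u_1,\dots,u_n$; $y_1,\dots,y_n$; $f,h$. Its bracket is defined on basis elements by: $[e_i,e_j]=e_i\wedge e_j$ for $i<j$ (so $[e_j,e_i]=-e_i\wedge e_j$), $[e_i,x]=x_i$, $[e_i,u]=u_i$, $[e_i,y]=y_i$, $[a,b]=c$, $[a,y]=f$, $[a,c]=h$, $[b,u]=h$, $[b,y]=h$, $[x,u]=f$, $[x,y]=h$, extended by antisymmetry, and all other brackets of pairs of basis elements are zero. Let $E=\operatorname{span}\{e_1,\dots,e_n\}$ and let $W$ be the span of all the other basis vectors (so $\mathfrak{n}=E\oplus W$). Let $\operatorname{Der}(\mathfrak{n})_1$ be the set of derivations $D$ of $\mathfrak{n}$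 with $D(E)\subset W$. For a basis $B=\{e'_1,\dots,e'_n\}$ of $E$, put $x'_i=[e'_i,x]$, $u'_i=[e'_i,u]$, $y'_i=[e'_i,y]$, $e'_i\wedge e'_j=[e'_i,e'_j]$, and let $\mathfrak{B}(B)$ be the ordered basis $e'_1,\dots,e'_n,a,b,x,u,y,(e'_i\wedge e'_j)_{1\le i<j\le n}$ (lexicographic order), $c,x'_1,\dots,x'_n,u'_1,\dots,u'_n,y'_1,\dots,y'_n,f,h$. (For $B=\{e_1,\dots,e_n\}$ this is the original basis; for every $B$ the bracket relations above hold with primed elements in place of unprimed ones.) *)

From HB Require Import structures.
From mathcomp Require Import all_boot all_order all_algebra.
Set Implicit Arguments. Unset Strict Implicit. Unset Printing Implicit Defensive.
Import Order.TTheory GRing.Theory Num.Theory.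
Local Open Scope ring_scope.

(* Index pairs (i,j) with i < j, labelling the basis vectors e_i /\ e_j. *)
Definition wpair (n : nat) := {p : 'I_n * 'I_n | (p.1 < p.2)%N}.

Inductive lbl (n : nat) :=
  | Le of 'I_n | La | Lb | Lx | Lu | Ly | Lw of wpair n | Lc
  | Lxi of 'I_n | Lui of 'I_n | Lyi of 'I_n | Lf | Lh.
Arguments La {n}. Arguments Lb {n}. Arguments Lx {n}. Arguments Lu {n}.
Arguments Ly {n}. Arguments Lc {n}. Arguments Lf {n}. Arguments Lh {n}.

Definition lbl_code n (l : lbl n) :
  ('I_n + 'I_5 + wpair n + unit + 'I_n + 'I_n + 'I_n + bool)%type :=
  match l with
  | Le i => inl (inl (inl (inl (inl (inl (inl i))))))
  | La => inl (inl (inl (inl (inl (inl (inr (inord 0)))))))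
  | Lb => inl (inl (inl (inl (inl (inl (inr (inord 1)))))))
  | Lx => inl (inl (inl (inl (inl (inl (inr (inord 2)))))))
  | Lu => inl (inl (inl (inl (inl (inl (inr (inord 3)))))))
  | Ly => inl (inl (inl (inl (inl (inl (inr (inord 4)))))))
  | Lw w => inl (inl (inl (inl (inl (inr w)))))
  | Lc => inl (inl (inl (inl (inr tt))))
  | Lxi i => inl (inl (inl (inr i)))
  | Lui i => inl (inl (inr i))
  | Lyi i => inl (inr i)
  | Lf => inr false
  | Lh => inr true
  end.

Definition lbl_decode n
  (s : ('I_n + 'I_5 + wpair n + unit + 'I_n + 'I_n + 'I_n + bool)%type) : lbl n :=
  match s with
  | inl (inl (inl (inl (inl (inl (inl i)))))) => Le i
  | inl (inl (inl (inl (inl (inl (inr k)))))) =>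
      match val k with 0 => La | 1 => Lb | 2 => Lx | 3 => Lu | _ => Ly end
  | inl (inl (inl (inl (inl (inr w))))) => Lw w
  | inl (inl (inl (inl (inr _)))) => Lc
  | inl (inl (inl (inr i))) => Lxi i
  | inl (inl (inr i)) => Lui i
  | inl (inr i) => Lyi i
  | inr false => Lf
  | inr true => Lh
  end.

Lemma lbl_codeK n : cancel (@lbl_code n) (@lbl_decode n).
Proof. by case=> //= *; rewrite inordK. Qed.

HB.instance Definition _ n := Finite.copy (lbl n) (can_type (@lbl_codeK n)).

Section LieAlg.
Variables (K : fieldType) (n : nat).

(* Vectors of n(n): coordinate functions on the original basis. *)
Definition vec := {ffun lbl n -> K^o}.

Definition bv (l : lbl n) : vec := [ffun m => (m == l)%:R].

(* One-sided table of the defining brackets [l, m] (listed pairs only). *)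
Definition br1 (l m : lbl n) : vec :=
  match l, m with
  | Le i, Le j => if @insub _ (fun p : 'I_n * 'I_n => (p.1 < p.2)%N) (wpair n) (i, j)
                    is Some w then bv (Lw w) else 0
  | Le i, Lx => bv (Lxi i)
  | Le i, Lu => bv (Lui i)
  | Le i, Ly => bv (Lyi i)
  | La, Lb => bv Lc
  | La, Ly => bv Lf
  | La, Lc => bv Lh
  | Lb, Lu => bv Lh
  | Lb, Ly => bv Lh
  | Lx, Lu => bv Lf
  | Lx, Ly => bv Lh
  | _, _ => 0
  end.

Definition br (l m : lbl n) : vec := br1 l m - br1 m l.

Definition bracket (v w : vec) : vec :=
  \sum_(l : lbl n) \sum_(m : lbl n) (v l * w m) *: br l m.

(* E = span{e_i}, W = span of the other basis vectors. *)
Definition inE (v : vec) : Prop := forall l, (if l is Le _ then false else true) -> v l = 0.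
Definition inW (v : vec) : Prop := forall i, v (Le i) = 0.

Definition is_derivation (D : vec -> vec) : Prop :=
  linear D /\ forall v w, D (bracket v w) = bracket (D v) w + bracket v (D w).

Definition Der1 (D : vec -> vec) : Prop :=
  is_derivation D /\ forall v, inE v -> inW (D v).

(* A basis B = {e'_1,...,e'_n} of E is given by an invertible matrix P:
   e'_i = sum_j P i j e_j. *)
Definition eprime (P : 'M[K]_n) (i : 'I_n) : vec := \sum_j P i j *: bv (Le j).

Definition bprime (P : 'M[K]_n) (l : lbl n) : vec :=
  match l with
  | Le i => eprime P i
  | Lw w => bracket (eprime P (val w).1) (eprime P (val w).2)
  | Lxi i => bracket (eprime P i) (bv Lx)
  | Lui i => bracket (eprime P i) (bv Lu)
  | Lyi i => bracket (eprime P i) (bv Ly)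
  | l => bv l
  end.

(* Position of a label in the order of frak{B}(B):
   e_1..e_n, a, b, x, u, y, wedges (lexicographic), c, x_i, u_i, y_i, f, h. *)
Definition grp (l : lbl n) : nat :=
  match l with
  | Le _ => 0 | La => 1 | Lb => 2 | Lx => 3 | Lu => 4 | Ly => 5 | Lw _ => 6
  | Lc => 7 | Lxi _ => 8 | Lui _ => 9 | Lyi _ => 10 | Lf => 11 | Lh => 12
  end%N.
Definition key (l : lbl n) : nat :=
  match l with
  | Le i | Lxi i | Lui i | Lyi i => i
  | Lw w => (val w).1 * n + (val w).2
  | _ => 0
  end%N.
Definition prec (m l : lbl n) : bool :=
  (grp m < grp l)%N || ((grp m == grp l) && (key m < key l)%N).

End LieAlg.

From Pilot Require Import Defs.
From HB Require Import structures.
From mathcomp Require Import all_boot all_order all_algebra.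
Set Implicit Arguments. Unset Strict Implicit. Unset Printing Implicit Defensive.
Import GRing.Theory.
Local Open Scope ring_scope.

(** Applying the Leibniz rule to a defining relation [[l, m] = t] and
    reading off one well-chosen coordinate expresses a coordinate of [D]
    through coordinates already known to vanish, or through [D(E) <= W].  In
    this way every coordinate of [D] that would break lower triangularity in
    the original basis vanishes, except inside the blocks [e_i], [e_i /\ e_j],
    [x_i], [u_i], [y_i].  The primed basis differs from the original one by an
    invertible change of basis inside each of these blocks, so triangularity
    with respect to the blocks survives; inside the [x'], [u'], [y'] blocks
    the Leibniz rule for [D [e'_i, x]], [D [e'_i, u]], [D [e'_i, y]] shows that
    only the diagonal entry can appear. *)

Lemma sumr_supp1 (V : nmodType) (I : finType) (F : I -> V) i0 :
  (forall i, i != i0 -> F i = 0) -> \sum_i F i = F i0.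
Proof. by move=> F0; rewrite (bigD1 i0) //= big1 ?addr0. Qed.

Lemma invmx_comb (R : comUnitRingType) (V : lmodType R) m (P : 'M[R]_m)
    (g g' : 'I_m -> V) :
  P \in unitmx -> (forall j, g' j = \sum_i P j i *: g i) ->
  forall k, g k = \sum_j invmx P k j *: g' j.
Proof.
move=> Pu g'E k; under eq_bigr do rewrite g'E scaler_sumr.
rewrite exchange_big /=.
have coefE i : \sum_j invmx P k j *: (P j i *: g i) = (invmx P *m P) k i *: g i.
  by rewrite mxE scaler_suml; apply: eq_bigr => j _; rewrite scalerA.
under eq_bigr do rewrite coefE.
rewrite mulVmx // (sumr_supp1 (i0 := k)) ?mxE ?eqxx ?scale1r // => i /negbTE.
by rewrite mxE eq_sym => ->; rewrite scale0r.
Qed.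

Section Bracket.
Variables (K : fieldType) (n : nat).
Local Notation vec := (vec K n).
Local Notation bv := (@bv K n).
Local Notation br := (@br K n).
Local Notation bracket := (@bracket K n).
Local Notation lbl := (lbl n).

Definition lbl_eqb (l m : lbl) : bool :=
  match l, m with
  | Le i, Le j | Lxi i, Lxi j | Lui i, Lui j | Lyi i, Lyi j => i == j
  | Lw v, Lw w => v == w
  | _, _ => (grp l == grp m)%N
  end.

Lemma lbl_eqE (l m : lbl) : (l == m) = lbl_eqb l m.
Proof.
apply/eqP/idP => [->|]; first by case: m => * /=.
by case: l; case: m => //= x y /eqP ->.
Qed.

Lemma vecZE (a : K) (v : vec) t : (a *: v) t = a * v t.
Proof. by rewrite ffunE. Qed.
Lemma vecDE (v w : vec) t : (v + w) t = v t + w t.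
Proof. by rewrite ffunE. Qed.
Lemma vecNE (v : vec) t : (- v) t = - v t.
Proof. by rewrite ffunE. Qed.
Lemma vecBE (v w : vec) t : (v - w) t = v t - w t.
Proof. by rewrite !ffunE. Qed.
Lemma vec0E t : (0 : vec) t = 0.
Proof. by rewrite ffunE. Qed.
Lemma vec_sumE I (r : seq I) (Pr : pred I) (F : I -> vec) t :
  (\sum_(i <- r | Pr i) F i) t = \sum_(i <- r | Pr i) F i t.
Proof. by rewrite sum_ffunE. Qed.
Lemma bvE l m : bv l m = (m == l)%:R.
Proof. by rewrite ffunE. Qed.

Lemma vec_expand (v : vec) : v = \sum_m v m *: bv m.
Proof.
apply/ffunP => t; rewrite vec_sumE (sumr_supp1 (i0 := t)) ?vecZE ?bvE ?eqxx ?mulr1 //.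
by move=> m /negbTE; rewrite vecZE bvE eq_sym => ->; rewrite mulr0.
Qed.

Lemma bracketDl u v w : bracket (u + v) w = bracket u w + bracket v w.
Proof.
rewrite /bracket -big_split; apply: eq_bigr => l _.
by rewrite -big_split; apply: eq_bigr => m _; rewrite vecDE mulrDl scalerDl.
Qed.

Lemma bracketDr u v w : bracket u (v + w) = bracket u v + bracket u w.
Proof.
rewrite /bracket -big_split; apply: eq_bigr => l _.
by rewrite -big_split; apply: eq_bigr => m _; rewrite vecDE mulrDr scalerDl.
Qed.

Lemma bracketZl a v w : bracket (a *: v) w = a *: bracket v w.
Proof.
rewrite /bracket scaler_sumr; apply: eq_bigr => l _.
by rewrite scaler_sumr; apply: eq_bigr => m _; rewrite vecZE scalerA mulrA.
Qed.

Lemma bracketZr a v w : bracket v (a *: w) = a *: bracket v w.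
Proof.
rewrite /bracket scaler_sumr; apply: eq_bigr => l _.
by rewrite scaler_sumr; apply: eq_bigr => m _; rewrite vecZE scalerA mulrCA.
Qed.

Lemma bracket_suml I (r : seq I) (Pr : pred I) (F : I -> vec) w :
  bracket (\sum_(i <- r | Pr i) F i) w = \sum_(i <- r | Pr i) bracket (F i) w.
Proof.
apply: (big_rec2 (fun a b => bracket a w = b)) => [|i a b _ <-].
  by rewrite -{1}[0 : vec](scale0r (0 : vec)) bracketZl scale0r.
by rewrite bracketDl.
Qed.

Lemma bracket_sumr I (r : seq I) (Pr : pred I) (F : I -> vec) w :
  bracket w (\sum_(i <- r | Pr i) F i) = \sum_(i <- r | Pr i) bracket w (F i).
Proof.
apply: (big_rec2 (fun a b => bracket w a = b)) => [|i a b _ <-].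
  by rewrite -{1}[0 : vec](scale0r (0 : vec)) bracketZr scale0r.
by rewrite bracketDr.
Qed.

Lemma bracketC v w : bracket v w = - bracket w v.
Proof.
rewrite /bracket exchange_big -sumrN; apply: eq_bigr => l _.
rewrite -sumrN; apply: eq_bigr => m _.
by rewrite {1}/br -opprB scalerN mulrC.
Qed.

Lemma bracketvv v : (2%:R : K) != 0 -> bracket v v = 0.
Proof.
move=> two_neq0; have two_vv : 2%:R *: bracket v v = 0.
  by rewrite mulr2n scalerDl scale1r {1}bracketC addNr.
by rewrite -[bracket v v]scale1r -(mulVf two_neq0) -scalerA two_vv scaler0.
Qed.

Lemma bracket_bvl l w : bracket (bv l) w = \sum_m w m *: br l m.
Proof.
rewrite /bracket (sumr_supp1 (i0 := l)) => [|l' /negbTE l'l].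
  by apply: eq_bigr => m _; rewrite bvE eqxx mul1r.
by rewrite big1 // => m _; rewrite bvE l'l mul0r scale0r.
Qed.

Lemma bracket_bv l m : bracket (bv l) (bv m) = br l m.
Proof.
rewrite bracket_bvl (sumr_supp1 (i0 := m)) ?bvE ?eqxx ?scale1r //.
by move=> m' /negbTE; rewrite bvE => ->; rewrite scale0r.
Qed.

Lemma bracket_bvlE l w t : bracket (bv l) w t = \sum_m w m * br l m t.
Proof. by rewrite bracket_bvl vec_sumE; apply: eq_bigr => m _; rewrite vecZE. Qed.

Lemma bracket_bvrE v m t : bracket v (bv m) t = \sum_l v l * br l m t.
Proof.
rewrite bracketC vecNE bracket_bvlE -sumrN; apply: eq_bigr => l _.
by rewrite /br !vecBE -mulrN opprB.
Qed.

Lemma br_ee (w : wpair n) : br (Le (val w).1) (Le (val w).2) = bv (Lw w).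
Proof.
case: w => [[k l] kl] /=; rewrite /br /=.
case: insubP => [w _ wE|]; last by rewrite /= kl.
case: insubP => [w' /= lk _|_]; first by have := ltn_trans kl lk; rewrite ltnn.
by rewrite subr0; congr (bv (Lw _)); apply: val_inj.
Qed.


End Bracket.

Ltac brsimp := rewrite /br /= ?vecBE ?vec0E ?bvE ?lbl_eqE /= ?mulr0n ?mulr1n
   ?subr0 ?sub0r ?mulr0 ?mul0r ?oppr0 ?mulr1 ?mulrN1; try done.

Section BracketBlocks.
Variables (K : fieldType) (n : nat).
Local Notation bv := (@bv K n).
Local Notation bracket := (@bracket K n).

Lemma bracket_WE_low u v t :
  Defs.inW u -> Defs.inE v -> (grp t < 8)%N -> bracket u v t = 0.
Proof.
move=> uW vE ht; rewrite /bracket vec_sumE big1 // => l _.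
rewrite vec_sumE big1 // => m _; rewrite vecZE.
case: m => [k| | | | | |w| |k|k|k| |]; try by rewrite vE ?mulr0 ?mul0r.
case: l => [j| | | | | |w| |j|j|j| |]; first by rewrite uW !mul0r.
all: by case: t ht => *; brsimp.
Qed.

Lemma bracket_EW_low u v t :
  Defs.inW u -> Defs.inE v -> (grp t < 8)%N -> bracket v u t = 0.
Proof. by move=> uW vE ht; rewrite bracketC vecNE bracket_WE_low ?oppr0. Qed.

Lemma bracket_Wbv_low u m t : Defs.inW u -> (grp m \in [:: 3; 4; 5])%N ->
  (grp t < 11)%N -> bracket u (bv m) t = 0.
Proof.
move=> uW hm ht; rewrite bracket_bvrE big1 // => p _.
by case: m hm => //= _; case: p; case: t ht => *; brsimp; rewrite ?uW ?mul0r.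
Qed.

Lemma bracket_Ebv v m : Defs.inE v -> (grp m \notin [:: 0; 3; 4; 5])%N ->
  bracket v (bv m) = 0.
Proof.
move=> vE hm; apply/ffunP => t; rewrite vec0E bracket_bvrE big1 // => p _.
case: p => [k| | | | | |w| |k|k|k| |]; try by rewrite vE ?mul0r.
by case: m hm => *; brsimp.
Qed.

End BracketBlocks.

Section Derivation.
Variables (K : fieldType) (n : nat) (D : vec K n -> vec K n).
Hypothesis DDer : Der1 D.
Local Notation vec := (vec K n).
Local Notation bv := (@bv K n).
Local Notation br := (@br K n).
Local Notation bracket := (@bracket K n).
Local Notation lbl := (lbl n).
Local Notation d l := (D (bv l)).

Let D_linear : linear D. Proof. by case: DDer => [[]]. Qed.
HB.instance Definition _ := GRing.isLinear.Build K vec vec *:%R D D_linear.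

Lemma D_bracket v w : D (bracket v w) = bracket (D v) w + bracket v (D w).
Proof. by case: DDer => [[_ ->]]. Qed.

Lemma D_EW v : Defs.inE v -> Defs.inW (D v).
Proof. by case: DDer => _; apply. Qed.

Lemma D_br_coord l m t :
  D (br l m) t = \sum_p d l p * br p m t + \sum_p d m p * br l p t.
Proof. by rewrite -bracket_bv D_bracket vecDE bracket_bvrE bracket_bvlE. Qed.

Ltac off_support := let hp := fresh "hp" in let i := fresh "i" in
  case=> [i| | | | | |? | |i|i|i| |] hp; brsimp;
  rewrite ?lbl_eqE /= in hp; rewrite ?[_ == i]eq_sym ?(negbTE hp) ?mulr0 //.

Lemma Dc_low t : (grp t < 7)%N -> d Lc t = 0.
Proof.
move=> ht; have := D_br_coord La Lb t.
rewrite !big1 => [|p _|p _]; try by case: p; case: t ht => *; brsimp.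
by brsimp; rewrite addr0.
Qed.

Lemma Dh_low t : (grp t < 12)%N -> d Lh t = 0.
Proof.
move=> ht; have := D_br_coord La Lc t.
rewrite !big1 => [|p _|p _]; try by case: p; case: t ht => *; brsimp; rewrite ?Dc_low.
by brsimp; rewrite addr0.
Qed.

Lemma Da_e j : d La (Le j) = 0.
Proof.
have := D_br_coord La Lx (Lxi j).
rewrite (sumr_supp1 (i0 := Le j)); last by off_support.
rewrite big1 => [|p _]; last by case: p => *; brsimp.
by brsimp; rewrite eqxx mulr1 raddf0 vec0E addr0.
Qed.

Lemma Db_e j : d Lb (Le j) = 0.
Proof.
have := D_br_coord Lb Lx (Lxi j).
rewrite (sumr_supp1 (i0 := Le j)); last by off_support.
rewrite big1 => [|p _]; last by case: p => *; brsimp.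
by brsimp; rewrite eqxx mulr1 raddf0 vec0E addr0.
Qed.

Lemma Dx_e j : d Lx (Le j) = 0.
Proof.
have := D_br_coord Lx Ly (Lyi j).
rewrite (sumr_supp1 (i0 := Le j)); last by off_support.
rewrite big1 => [|p _]; last by case: p => *; brsimp.
by brsimp; rewrite eqxx mulr1 Dh_low // addr0.
Qed.

Lemma Du_e j : d Lu (Le j) = 0.
Proof.
have := D_br_coord Lu Ly (Lyi j).
rewrite (sumr_supp1 (i0 := Le j)); last by off_support.
rewrite big1 => [|p _]; last by case: p => *; brsimp.
by brsimp; rewrite eqxx mulr1 raddf0 vec0E addr0.
Qed.

Lemma Dy_e j : d Ly (Le j) = 0.
Proof.
have := D_br_coord Ly Lu (Lui j).
rewrite (sumr_supp1 (i0 := Le j)); last by off_support.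
rewrite big1 => [|p _]; last by case: p => *; brsimp.
by brsimp; rewrite eqxx mulr1 raddf0 vec0E addr0.
Qed.

Lemma Db_a : d Lb La = 0.
Proof.
have := D_br_coord Lb Lc Lh.
rewrite (sumr_supp1 (i0 := La)); last by off_support.
rewrite big1 => [|p _]; last by case: p => *; brsimp; rewrite Dc_low.
by brsimp; rewrite raddf0 vec0E addr0.
Qed.

Lemma Dx_a : d Lx La = 0.
Proof.
have := D_br_coord Lx Lc Lh.
rewrite (sumr_supp1 (i0 := La)); last by off_support.
rewrite big1 => [|p _]; last by case: p => *; brsimp; rewrite Dc_low.
by brsimp; rewrite raddf0 vec0E addr0.
Qed.

Lemma Du_a : d Lu La = 0.
Proof.
have := D_br_coord Lu Lc Lh.
rewrite (sumr_supp1 (i0 := La)); last by off_support.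
rewrite big1 => [|p _]; last by case: p => *; brsimp; rewrite Dc_low ?oppr0.
by brsimp; rewrite raddf0 vec0E addr0.
Qed.

Lemma Dy_a : d Ly La = 0.
Proof.
have := D_br_coord Ly Lc Lh.
rewrite (sumr_supp1 (i0 := La)); last by off_support.
rewrite big1 => [|p _]; last by case: p => *; brsimp; rewrite Dc_low ?oppr0.
by brsimp; rewrite raddf0 vec0E addr0.
Qed.

Lemma Dx_b : d Lx Lb = 0.
Proof.
have := D_br_coord Lx La Lc.
rewrite (sumr_supp1 (i0 := Lb)); last by off_support.
rewrite big1 => [|p _]; last by case: p => *; brsimp.
by brsimp; rewrite raddf0 vec0E addr0 => /eqP; rewrite eq_sym oppr_eq0 => /eqP.
Qed.

Lemma Du_b : d Lu Lb = 0.
Proof.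
have := D_br_coord Lu La Lc.
rewrite (sumr_supp1 (i0 := Lb)); last by off_support.
rewrite big1 => [|p _]; last by case: p => *; brsimp.
by brsimp; rewrite raddf0 vec0E addr0 => /eqP; rewrite eq_sym oppr_eq0 => /eqP.
Qed.

(* Both [[x, u]] and [[a, y]] equal [f]: the first gives [d f c = 0], the
   second [d f c = d y b]. *)
Lemma Dy_b : d Ly Lb = 0.
Proof.
have := D_br_coord La Ly Lc; have := D_br_coord Lx Lu Lc.
rewrite [in X in X -> _]big1 => [|p _]; last by case: p => *; brsimp.
rewrite [in X in X -> _]big1 => [|p _]; last by case: p => *; brsimp.
rewrite [in X in _ -> X]big1 => [|p _]; last by case: p => *; brsimp.
rewrite addr0 add0r (sumr_supp1 (i0 := Lb)); last by off_support.
by brsimp => ->.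
Qed.

Lemma Du_x : d Lu Lx = 0.
Proof.
have := D_br_coord Lu Ly Lh.
rewrite (sumr_supp1 (i0 := Lx)); last by off_support; rewrite ?Du_b.
rewrite big1 => [|p _]; last by case: p => *; brsimp; rewrite ?Dy_b ?oppr0.
by brsimp; rewrite raddf0 vec0E addr0.
Qed.

Lemma Dy_x : d Ly Lx = 0.
Proof.
have := D_br_coord Lu Ly Lf.
rewrite big1 => [|p _]; last by case: p => *; brsimp; rewrite ?Du_a.
rewrite (sumr_supp1 (i0 := Lx)); last by off_support.
by brsimp; rewrite raddf0 vec0E add0r => /eqP; rewrite eq_sym oppr_eq0 => /eqP.
Qed.

Lemma Dy_u : d Ly Lu = 0.
Proof.
have := D_br_coord Lx Ly Lf.
rewrite big1 => [|p _]; last by case: p => *; brsimp; rewrite ?Dx_a.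
rewrite (sumr_supp1 (i0 := Lu)); last by off_support.
by brsimp; rewrite Dh_low // add0r.
Qed.

Lemma Df_low t : (grp t < 11)%N -> d Lf t = 0.
Proof.
move=> ht; have := D_br_coord La Ly t.
rewrite big1 => [|p _]; last by case: p; case: t ht => *; brsimp; rewrite ?Da_e ?mul0r.
rewrite big1 => [|p _]; last by case: p; case: t ht => *; brsimp; rewrite ?Dy_b.
by brsimp; rewrite addr0.
Qed.

Lemma D_bv_lower l m : l \in [:: La; Lb; Lx; Lu; Ly; Lc; Lf; Lh] ->
  (grp m < grp l)%N -> d l m = 0.
Proof.
rewrite !inE !lbl_eqE.
case: l => //= _; try by move/Dc_low || move/Df_low || move/Dh_low.
- by case: m => //= *; rewrite Da_e.
- by case: m => //= *; rewrite (Db_e, Db_a).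
- by case: m => //= *; rewrite (Dx_e, Dx_a, Dx_b).
- by case: m => //= *; rewrite (Du_e, Du_a, Du_b, Du_x).
- by case: m => //= *; rewrite (Dy_e, Dy_a, Dy_b, Dy_x, Dy_u).
Qed.
End Derivation.

Section PrimedBasis.
Variables (K : fieldType) (n : nat) (P : 'M[K]_n).
Hypothesis P_unit : P \in unitmx.
Local Notation vec := (vec K n).
Local Notation bv := (@bv K n).
Local Notation br := (@br K n).
Local Notation bracket := (@bracket K n).
Local Notation lbl := (lbl n).
Local Notation bp := (bprime P).
Local Notation ep := (eprime P).

Definition bspan (S : pred lbl) (v : vec) : Prop :=
  exists c : lbl -> K, v = \sum_m c m *: bp m /\ forall m, ~~ S m -> c m = 0.

Lemma bspan0 S : bspan S 0.
Proof. by exists (fun=> 0); split=> //; rewrite big1 // => m _; rewrite scale0r. Qed.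

Lemma bspanD S v w : bspan S v -> bspan S w -> bspan S (v + w).
Proof.
move=> [c [-> c0]] [c' [-> c'0]]; exists (fun m => c m + c' m); split.
  by rewrite -big_split; apply: eq_bigr => m _; rewrite scalerDl.
by move=> m hm; rewrite c0 ?c'0 ?addr0.
Qed.

Lemma bspanZ S a v : bspan S v -> bspan S (a *: v).
Proof.
move=> [c [-> c0]]; exists (fun m => a * c m); split.
  by rewrite scaler_sumr; apply: eq_bigr => m _; rewrite scalerA.
by move=> m hm; rewrite c0 ?mulr0.
Qed.

Lemma bspanN S v : bspan S v -> bspan S (- v).
Proof. by rewrite -scaleN1r; apply: bspanZ. Qed.

Lemma bspan_sum S I (r : seq I) (Pr : pred I) (F : I -> vec) :
  (forall i, Pr i -> bspan S (F i)) -> bspan S (\sum_(i <- r | Pr i) F i).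
Proof. by move=> FS; apply: big_ind => //; [apply: bspan0 | apply: bspanD]. Qed.

Lemma bspan_bp (S : pred lbl) m : S m -> bspan S (bp m).
Proof.
move=> Sm; exists (fun m' => (m' == m)%:R); split.
  by rewrite (sumr_supp1 (i0 := m)) ?eqxx ?scale1r // => m' /negbTE ->; rewrite scale0r.
by move=> m'; case: eqP => // ->; rewrite Sm.
Qed.

Lemma bspanS (S1 S2 : pred lbl) v :
  (forall m, S1 m -> S2 m) -> bspan S1 v -> bspan S2 v.
Proof.
move=> S12 [c [-> c0]]; exists c; split=> // m S2m; apply: c0.
by apply: contra S2m; apply: S12.
Qed.

Lemma eprime_inE i : Defs.inE (ep i).
Proof.
move=> l hl; rewrite /eprime vec_sumE big1 // => j _.
by rewrite vecZE bvE; case: l hl => //= *; rewrite ?mulr0n ?mulr0.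
Qed.

Lemma bracket_ep_bv i m : bracket (ep i) (bv m) = \sum_j P i j *: br (Le j) m.
Proof.
rewrite /eprime bracket_suml; apply: eq_bigr => j _.
by rewrite bracketZl bracket_bv.
Qed.

Lemma bv_e_comb k : bv (Le k) = \sum_j invmx P k j *: bp (Le j).
Proof. exact: (invmx_comb (g := fun j => bv (Le j)) (g' := fun j => bp (Le j))). Qed.

Hypothesis two_neq0 : (2%:R : K) != 0.

Lemma bv_bspan m : bspan (fun t => grp t == grp m)%N (bv m).
Proof.
have ext_comb (l : 'I_n -> lbl) (m' : lbl) :
    (forall j, br (Le j) m' = bv (l j)) -> (forall j, bp (l j) = bracket (ep j) (bv m')) ->
    forall k, bv (l k) = \sum_j invmx P k j *: bp (l j).
  move=> brE bpE; apply: invmx_comb => // j.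
  by rewrite bpE bracket_ep_bv; apply: eq_bigr => k _; rewrite brE.
case: m => [k| | | | | |w| |k|k|k| |];
  [ | exact: (@bspan_bp _ La) | exact: (@bspan_bp _ Lb) | exact: (@bspan_bp _ Lx)
    | exact: (@bspan_bp _ Lu) | exact: (@bspan_bp _ Ly) | | exact: (@bspan_bp _ Lc)
    | | | | exact: (@bspan_bp _ Lf) | exact: (@bspan_bp _ Lh)].
- by rewrite bv_e_comb; apply: bspan_sum => j _; apply/bspanZ/bspan_bp.
- case: w => [[k l] kl]; rewrite -br_ee -bracket_bv /= bv_e_comb [bv (Le l)]bv_e_comb.
  rewrite bracket_suml; apply: bspan_sum => j _; rewrite bracketZl; apply: bspanZ.
  rewrite bracket_sumr; apply: bspan_sum => j' _; rewrite bracketZr; apply: bspanZ.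
  case: (ltngtP j j') => [jj'|j'j|/val_inj ->]; last by rewrite bracketvv //; apply: bspan0.
    exact: (@bspan_bp _ (Lw (exist _ (j, j') jj'))).
  by rewrite bracketC; apply/bspanN/(@bspan_bp _ (Lw (exist _ (j', j) j'j))).
- rewrite (@ext_comb (@Lxi n) Lx) => [|j|//]; last by rewrite /br /= subr0.
  by apply: bspan_sum => j _; apply/bspanZ/bspan_bp.
- rewrite (@ext_comb (@Lui n) Lu) => [|j|//]; last by rewrite /br /= subr0.
  by apply: bspan_sum => j _; apply/bspanZ/bspan_bp.
- rewrite (@ext_comb (@Lyi n) Ly) => [|j|//]; last by rewrite /br /= subr0.
  by apply: bspan_sum => j _; apply/bspanZ/bspan_bp.
Qed.

Lemma bspan_grp_ge (k : nat) (v : vec) : (forall m, (grp m < k)%N -> v m = 0) ->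
  bspan (fun m => k <= grp m)%N v.
Proof.
move=> v0; rewrite (vec_expand v); apply: bspan_sum => m _.
have [km|mk] := leqP k (grp m); last by rewrite v0 // scale0r; apply: bspan0.
by apply/bspanZ/(bspanS _ (bv_bspan m)) => t /eqP ->.
Qed.

Variable D : vec -> vec.
Hypothesis DDer : Der1 D.
Local Notation d l := (D (bv l)).

Lemma D_bprime_e i : bspan (fun m => 1 <= grp m)%N (D (bp (Le i))).
Proof.
apply: bspan_grp_ge => m; case: m => //= k _.
exact: (D_EW DDer (eprime_inE i)).
Qed.

Lemma D_bprime_w w : bspan (fun m => 8 <= grp m)%N (D (bp (Lw w))).
Proof.
have DeW j : Defs.inW (D (ep j)) by apply: (D_EW DDer); apply: eprime_inE.
apply: bspan_grp_ge => m hm; rewrite /= (D_bracket DDer) vecDE.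
by rewrite bracket_WE_low ?bracket_EW_low ?addr0 //; first [exact: DeW | exact: eprime_inE].
Qed.

(* [D [e'_i, m]] for [m] among [x, u, y]: the part [[D e'_i, m]] lies in the
   span of [f, h], and the part [[e'_i, D m]] picks up exactly the [x], [u],
   [y]-coordinates of [D m], as multiples of [x'_i], [u'_i], [y'_i]. *)
Lemma D_bprime_ext i m (S : pred lbl) : (grp m \in [:: 3; 4; 5])%N ->
  (forall t, 11 <= grp t -> S t)%N -> (forall k, d m (Le k) = 0) ->
  (d m Lx = 0 \/ S (Lxi i)) -> (d m Lu = 0 \/ S (Lui i)) ->
  (d m Ly = 0 \/ S (Lyi i)) ->
  bspan S (D (bracket (ep i) (bv m))).
Proof.
move=> hm S_top dE hx hu hy; rewrite (D_bracket DDer); apply: bspanD.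
  apply: bspanS S_top _; apply: bspan_grp_ge => t ht.
  by apply: bracket_Wbv_low => //; apply: (D_EW DDer); apply: eprime_inE.
rewrite (vec_expand (d m)) bracket_sumr; apply: bspan_sum => t _; rewrite bracketZr.
case: t => [k| | | | | |w| |k|k|k| |];
  try by rewrite bracket_Ebv ?scaler0 //; first [exact: bspan0 | exact: eprime_inE].
- by rewrite dE scale0r; apply: bspan0.
- case: hx => [->|Sx]; first by rewrite scale0r; apply: bspan0.
  exact/bspanZ/(@bspan_bp _ (Lxi i)).
- case: hu => [->|Su]; first by rewrite scale0r; apply: bspan0.
  exact/bspanZ/(@bspan_bp _ (Lui i)).
- case: hy => [->|Sy]; first by rewrite scale0r; apply: bspan0.
  exact/bspanZ/(@bspan_bp _ (Lyi i)).
Qed.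

Lemma D_bprime_lower l : bspan (fun m => ~~ prec m l) (D (bp l)).
Proof.
have low_block (l' : lbl) : key l' = 0%N -> l' \in [:: La; Lb; Lx; Lu; Ly; Lc; Lf; Lh] ->
    bspan (fun m => ~~ prec m l') (d l').
  move=> k0 l'_low; apply: bspanS (bspan_grp_ge (k := grp l') _) => m.
    by rewrite /prec k0 ltn0 andbF orbF -leqNgt.
  exact: D_bv_lower.
have ext_top (t : lbl) i : (11 <= grp t)%N ->
    [&& ~~ prec t (Lxi i), ~~ prec t (Lui i) & ~~ prec t (Lyi i)].
  by rewrite /prec; case: t.
case: l => [i| | | | | |w| |i|i|i| |];
  try by apply: low_block; rewrite ?inE ?eqxx ?orbT.
- by apply: bspanS (D_bprime_e i) => m; rewrite /prec ltn0; case: m.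
- by apply: bspanS (D_bprime_w w) => m; rewrite /prec; case: m.
- apply: D_bprime_ext => //; rewrite /prec /= ?ltnn; try by right.
    by move=> t /(ext_top _ i) /and3P[].
  exact: (Dx_e DDer).
- apply: D_bprime_ext => //; rewrite /prec /= ?ltnn; try by right.
  + by move=> t /(ext_top _ i) /and3P[].
  + exact: (Du_e DDer).
  + by left; exact: (Du_x DDer).
- apply: D_bprime_ext => //; rewrite /prec /= ?ltnn; try by right.
  + by move=> t /(ext_top _ i) /and3P[].
  + exact: (Dy_e DDer).
  + by left; exact: (Dy_x DDer).
  + by left; exact: (Dy_u DDer).
Qed.

End PrimedBasis.

Theorem mainTheorem2 (K : fieldType) (n : nat) :
  [pchar K] =i pred0 -> (0 < n)%N ->
  forall (P : 'M[K]_n), P \in unitmx ->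
  forall D : vec K n -> vec K n, Der1 D ->
  forall l : lbl n,
    exists c : lbl n -> K,
      D (bprime P l) = \sum_(m : lbl n) c m *: bprime P m /\
      (forall m, prec m l -> c m = 0).
Proof.
move=> char0 _ P P_unit D DDer l.
have two_neq0 : (2%:R : K) != 0.
  by apply/negP => /(natf0_pchar (isT : (0 < 2)%N)) [p]; rewrite char0.
have [c [DlE c0]] := D_bprime_lower P_unit two_neq0 DDer l.
by exists c; split=> // m hm; apply: c0; rewrite hm.
Qed.
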